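(* Let $(G,S,k)$ be an instance of \textsc{Edge Subset Feedback Vertex Set}, let $T=V(S)$, let $X$ be a dominant solution for $(G,S,k)$, and let $X_0=X\setminus T$. Then every nonempty set $Y\subseteq X_0$ sees at least $|Y|+2$ interesting components of $G-X-S$.
   Context: Graphs are finite and undirected and may contain loops and parallel edges (so cycles of length one and two are allowed). An instance of \textsc{Edge Subset Feedback Vertex Set} is $(G,S,k)$ with $G=(V,E)$, $S\subseteq E$, $k\in\mathbb{N}$. An $S$-cycle is a cycle containing at least one edge of $S$. A solution is a set $X\subseteq V$ with $|X|\le k$ such that $G-X$ contains no $S$-cycle. $V(S)$ is the set of vertices incident with an edge of $S$; $G-X-S$ is the graph obtained from $G$ by deleting the vertices of $X$ and the edges of $S$. A solution $X$ is dominant if it has minimum size among all solutions and, among minimum-size solutions, contains the maximum possible number of vertices of $T$. A connected component $K$ of $G-X-S$ is interesting if it contains a vertex of $T$. A vertex $x\in X_0$ sees a component $K$ if $x$ is adjacent in $G$ to some vertex of $K$; a set $Y\subseteq X_0$ sees $K$ if some $y\in Y$ sees $K$. *)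

(* A finite multigraph (loops and parallel edges allowed) is
   given by a finite vertex type V, a finite edge type E and an endpoint map
   ends : E -> V * V (the order of the pair is irrelevant; a loop has both
   components equal). *)
From mathcomp Require Import all_boot.
Set Implicit Arguments. Unset Strict Implicit. Unset Printing Implicit Defensive.

Section Graphs.
Variables (V E : finType) (ends : E -> V * V).

Definition joins (e : E) (a b : V) : bool :=
  (ends e == (a, b)) || (ends e == (b, a)).

Definition adjacent (a b : V) : bool := [exists e, joins e a b].

(* A cycle: distinct vertices v_0..v_{n-1} and distinct edges e_0..e_{n-1},
   n >= 1, with e_i joining v_i and v_{i+1 mod n}.  n = 1 is a loop, n = 2 a
   pair of parallel edges. *)
Definition is_cycle (vs : seq V) (es : seq E) : Prop :=
  0 < size es /\ size vs = size es /\ uniq vs /\ uniq es /\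
  all (fun p => joins p.1 p.2.1 p.2.2) (zip es (zip vs (rot 1 vs))).

Definition VS (S : {set E}) : {set V} :=
  [set v | [exists e in S, (v == (ends e).1) || (v == (ends e).2)]].

Definition no_S_cycle (S : {set E}) (X : {set V}) : Prop :=
  forall vs es, is_cycle vs es ->
    ~ (all (fun v => v \notin X) vs /\ has (fun e => e \in S) es).

Definition is_solution (S : {set E}) (k : nat) (X : {set V}) : Prop :=
  #|X| <= k /\ no_S_cycle S X.

Definition dominant (S : {set E}) (k : nat) (X : {set V}) : Prop :=
  is_solution S k X /\
  (forall Y, is_solution S k Y -> #|X| <= #|Y|) /\
  (forall Y, is_solution S k Y -> #|Y| = #|X| ->
     #|Y :&: VS S| <= #|X :&: VS S|).

Definition rGXS (S : {set E}) (X : {set V}) : rel V :=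
  fun x y => [&& x \notin X, y \notin X & [exists e, (e \notin S) && joins e x y]].

Definition is_component (S : {set E}) (X : {set V}) (K : {set V}) : bool :=
  [exists x, (x \notin X) && (K == [set y | connect (rGXS S X) x y])].

Definition interesting (T : {set V}) (K : {set V}) : bool := K :&: T != set0.

Definition sees (Y : {set V}) (K : {set V}) : bool :=
  [exists y in Y, [exists z in K, adjacent y z]].

End Graphs.

From mathcomp Require Import all_boot zify.
Set Implicit Arguments. Unset Strict Implicit. Unset Printing Implicit Defensive.

(* Suppose Y sees at most |Y| + 1 interesting components, and let N be the neighbours
   of Y in them.  As G - X has no S-cycle, every S-edge of G - X is a bridge, so cutting
   an S-edge on a path between two components of G - X - S met by N splits N in two;
   recursively, a set D of at most |Y| S-edges already separates these components in
   G - X - D.  Replacing Y by one endpoint of each edge of D gives a set X' with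
   |X'| <= |X|, and X' is still a solution: take an S-edge ab on a cycle avoiding X'.
   If the rest of the cycle avoids Y it lies in G - X; otherwise a and b reach
   vertices u, v of N without using D or ab, so u and v are connected in G - X - D,
   hence in G - X - S, which closes a cycle through ab in G - X.  By minimality
   |X'| = |X|, so D is nonempty and X' has more vertices in V(S) than X, contradicting
   dominance. *)

Lemma drop_zip (A B : Type) i (s : seq A) (t : seq B) :
  drop i (zip s t) = zip (drop i s) (drop i t).
Proof. by elim: s t i => [|x s IH] [|y t] [|i] //=; case: drop. Qed.

Lemma take_zip (A B : Type) i (s : seq A) (t : seq B) :
  take i (zip s t) = zip (take i s) (take i t).
Proof. by elim: s t i => [|x s IH] [|y t] [|i] //=; rewrite IH. Qed.

Lemma zip_rot (A B : Type) i (s : seq A) (t : seq B) :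
  size s = size t -> zip (rot i s) (rot i t) = rot i (zip s t).
Proof. by move=> eq_st; rewrite /rot zip_cat ?size_drop ?eq_st // drop_zip take_zip. Qed.

Lemma card_exchange (T : finType) (X Y W : {set T}) :
  Y \subset X -> [disjoint X & W] -> #|(X :\: Y) :|: W| = #|X| - #|Y| + #|W|.
Proof.
move=> YX XW; have := cardsUI (X :\: Y) W.
by rewrite (disjoint_setI0 (disjointWl (subsetDl X Y) XW)) cards0 addn0 cardsDS.
Qed.

Lemma card_exchangeI (T : finType) (X Y W A : {set T}) :
  [disjoint Y & A] -> W \subset A -> [disjoint X & W] ->
  #|X :&: A| + #|W| <= #|((X :\: Y) :|: W) :&: A|.
Proof.
move=> YA WA XW; have := cardsUI (X :&: A) W.
rewrite (disjoint_setI0 (disjointWl (subsetIl X A) XW)) cards0 addn0 => <-.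
apply/subset_leq_card/subsetP => x; rewrite !inE => /orP[/andP[xX xA] | xW].
  by rewrite xX xA (disjointFl YA xA).
by rewrite xW (subsetP WA x xW) orbT.
Qed.

Section Multigraph.
Variables (V E : finType) (ends : E -> V * V).
Implicit Types (S F D : {set E}) (N X Y Z : {set V}).

Lemma joinsC f x y : joins ends f x y = joins ends f y x.
Proof. by rewrite /joins orbC. Qed.

Lemma joins_fst f x y : joins ends f x y -> ((ends f).1 == x) || ((ends f).1 == y).
Proof. by case/orP=> /eqP ->; rewrite eqxx ?orbT. Qed.

Lemma joins_mem f x y u w : joins ends f x y -> joins ends f u w -> (x == u) || (x == w).
Proof. by rewrite /joins => /orP[] /eqP -> /orP[] /eqP [] *; subst; rewrite eqxx ?orbT. Qed.

Lemma joins_VS S f x y : f \in S -> joins ends f x y -> x \in VS ends S.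
Proof.
by move=> fS /orP[] /eqP ends_f; rewrite inE; apply/existsP; exists f;
  rewrite fS ends_f eqxx ?orbT.
Qed.

Lemma rGXS_sym F Z : symmetric (rGXS ends F Z).
Proof.
move=> x y; apply/and3P/and3P=> -[xZ yZ /existsP[f /andP[fF jf]]];
  by split=> //; apply/existsP; exists f; rewrite fF joinsC.
Qed.

Lemma connect_rGXS_sym F Z : connect_sym (rGXS ends F Z).
Proof. exact/sym_connect_sym/rGXS_sym. Qed.

Lemma rGXS_sub (F F' : {set E}) (Z Z' : {set V}) : F \subset F' -> Z \subset Z' ->
  subrel (rGXS ends F' Z') (rGXS ends F Z).
Proof.
move=> sFF' sZZ' x y /and3P[xZ yZ /existsP[f /andP[fF jf]]].
apply/and3P; split;
  [exact: contra (subsetP sZZ' x) xZ | exact: contra (subsetP sZZ' y) yZ |].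
by apply/existsP; exists f; rewrite jf andbT; apply: contra (subsetP sFF' f) fF.
Qed.

Lemma connect_rGXS_sub (F F' : {set E}) (Z Z' : {set V}) x y :
  F \subset F' -> Z \subset Z' ->
  connect (rGXS ends F' Z') x y -> connect (rGXS ends F Z) x y.
Proof. by move=> sFF' sZZ'; apply: connect_sub => u w /(rGXS_sub sFF' sZZ') /connect1. Qed.

Lemma path_rGXS_notin F Z x p : path (rGXS ends F Z) x p -> all [pred v | v \notin Z] p.
Proof. by elim: p x => //= y p IH x /andP[/and3P[_ -> _] /IH]. Qed.

Lemma connect_rGXS_notin F Z x y :
  connect (rGXS ends F Z) x y -> x \notin Z -> y \notin Z.
Proof.
case/connectP=> p /path_rGXS_notin p_notin -> xZ.
by have:= mem_last x p; rewrite inE => /orP[/eqP -> // | /(allP p_notin)].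
Qed.

Lemma path_rGXS_avoid F Z e x z y p :
  joins ends e x z -> x \notin y :: p ->
  path (rGXS ends F Z) y p -> path (rGXS ends (e |: F) Z) y p.
Proof.
move=> je xp; apply: (sub_in_path (P := mem (y :: p))); last exact/allP.
move=> u w up wp /and3P[uZ wZ /existsP[f /andP[fF jf]]].
apply/and3P; split=> //; apply/existsP; exists f; rewrite jf in_setU1 negb_or fF !andbT.
by apply: contraNneq xp => ef; rewrite ef in jf; case/orP: (joins_mem je jf) => /eqP ->.
Qed.

(* The endpoint clause only drives the induction: it keeps the first edge out of [es]. *)
Lemma path_rGXS_edges F Z x p :
  path (rGXS ends F Z) x p -> uniq (x :: p) ->
  exists es : seq E, [/\ size es = size p, uniq es, all [pred f | f \notin F] es,
    all (fun f => ((ends f).1 \in x :: p) && ((ends f).2 \in x :: p)) es &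
    all (fun q => joins ends q.1 q.2.1 q.2.2) (zip es (zip (belast x p) p))].
Proof.
elim: p x => [|y p IH] x /=; first by exists [::].
case/andP=> /and3P[_ _ /existsP[f /andP[fF jf]]] pth /andP[xp up].
have [es [size_es uniq_es es_F es_ends es_joins]] := IH y pth up.
have ends_f: ((ends f).1 \in [:: x, y & p]) && ((ends f).2 \in [:: x, y & p]).
  by case/orP: jf => /eqP ->; rewrite !inE !eqxx ?orbT.
exists (f :: es); split=> /=; rewrite ?size_es ?uniq_es ?fF ?jf ?ends_f ?andbT //=.
- apply: contraNN xp => /(allP es_ends) /andP[f1 f2].
  by case/orP: jf f1 f2 => /eqP -> /=.
- by apply: sub_all es_ends => g /andP[g1 g2]; rewrite !(in_cons x) g1 g2 !orbT.
Qed.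

Lemma S_cycle_of_connect S Z e a b :
  e \in S -> joins ends e a b -> b \notin Z ->
  connect (rGXS ends [set e] Z) b a -> ~ no_S_cycle ends S Z.
Proof.
move=> eS jab bZ /connectP[p0 pth0 Ea]; subst a; move: jab.
case: (shortenP pth0) => p pth up _ {pth0 p0} jab noS.
have p_notZ := path_rGXS_notin pth.
case: p pth up p_notZ jab => [|c p] pth up p_notZ jab.
  by apply: (noS [:: b] [:: e]); do ?split; rewrite /= ?jab ?bZ ?eS.
have [es [size_es uniq_es es_e _ es_joins]] := path_rGXS_edges pth up.
apply: (noS (b :: c :: p) (rcons es e)); last first.
  by split; [apply/andP | rewrite has_rcons eS].
do !split; rewrite ?size_rcons ?size_es //.
  by rewrite rcons_uniq uniq_es andbT; apply/negP => /(allP es_e); rewrite /= inE eqxx.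
rewrite rot1_cons [b :: c :: p]lastI zip_rcons ?size_belast //.
by rewrite zip_rcons ?size_zip ?size_belast ?size_es ?minnn // all_rcons /= jab es_joins.
Qed.

Lemma is_cycle_rot i vs es : is_cycle ends vs es -> is_cycle ends (rot i vs) (rot i es).
Proof.
case=> es_gt0 [size_vs [uniq_vs [uniq_es joins_es]]].
do !split; rewrite ?size_rot ?rot_uniq //.
rewrite rot_rot zip_rot ?size_rot // zip_rot ?size_zip ?size_rot ?size_vs ?minnn //.
by rewrite (perm_all _ (permEl (perm_rot _ _))).
Qed.

Lemma path_cycle_tail x w v es :
  size es = (size w).+1 ->
  all (fun q => joins ends q.1 q.2.1 q.2.2) (zip es (zip (x :: w) (rcons w v))) ->
  path [rel u u' | has (fun f => joins ends f u u') es] x (rcons w v).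
Proof.
elim: w x es => [|y w IH] x [|f es] //= [size_es].
  by case: es size_es => // _; rewrite !andbT => ->.
case/andP=> jf /(IH _ _ size_es) pth; rewrite jf /=.
by apply: sub_path pth => u u' /= ->; rewrite orbT.
Qed.

Lemma connect_of_cycle Z vs es e : is_cycle ends vs es ->
  all [pred v | v \notin Z] vs -> e \in es ->
  exists a b, [/\ joins ends e a b, b \in vs & connect (rGXS ends [set e] Z) b a].
Proof.
move=> cyc vs_Z /rot_to[i es' rot_es].
have := is_cycle_rot i cyc; rewrite rot_es.
have ws_Z : all [pred v | v \notin Z] (rot i vs).
  by rewrite (perm_all _ (permEl (perm_rot i vs))).
have sub_ws : {subset rot i vs <= vs} by move=> x; rewrite mem_rot.
case: (rot i vs) ws_Z sub_ws => [|v [|y w]] ws_Z sub_ws [_ [size_w [_ [uniq_es]]]] //.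
  rewrite rot1_cons /= => /andP[je _]; exists v, v.
  by split=> //; exact: sub_ws (mem_head _ _).
rewrite rot1_cons /= => /andP[je /path_cycle_tail pth].
have {}pth := pth (eq_add_S _ _ (esym size_w)).
exists v, y; split=> //; first by apply: sub_ws; rewrite !inE eqxx orbT.
apply/connectP; exists (rcons w v); last by rewrite last_rcons.
apply: (sub_in_path (P := [pred u | u \notin Z]) _ _ pth).
  2: by move: ws_Z; rewrite /= all_rcons /= => /and3P[-> -> ->].
move=> u u' uZ u'Z /hasP[f fes jf]; apply/and3P; split=> //.
apply/existsP; exists f; rewrite jf inE andbT.
by apply: contraTneq fes => ->; case/andP: uniq_es.
Qed.

Lemma no_S_cycleP S Z : no_S_cycle ends S Z <->
  (forall e a b, e \in S -> joins ends e a b -> b \notin Z ->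
     ~~ connect (rGXS ends [set e] Z) b a).
Proof.
split=> [noS e a b eS jab bZ | bridges vs es cyc [vs_Z /hasP[e ees eS]]].
  by apply/negP => /(S_cycle_of_connect eS jab bZ).
have [a [b [jab bvs]]] := connect_of_cycle cyc vs_Z ees.
exact/negP/(bridges e a b eS jab (allP vs_Z b bvs)).
Qed.

Section Separation.
Variables (S : {set E}) (Z : {set V}).

Definition component (u : V) : {set V} := [set y | connect (rGXS ends S Z) u y].

Definition separating N D : Prop :=
  [/\ D \subset S, {in D, forall f, (ends f).1 \notin Z},
      #|D| <= #|component @: N|.-1 &
      {in N &, forall u v, connect (rGXS ends D Z) u v -> connect (rGXS ends S Z) u v}].

Lemma card_component_split N F (P : pred V) :
  F \subset S -> {in N &, forall x y, connect (rGXS ends F Z) x y -> P x = P y} ->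
  #|component @: N| =
    #|component @: [set w in N | P w]| + #|component @: [set w in N | ~~ P w]|.
Proof.
move=> FS P_inv; have {1}-> : N = [set w in N | P w] :|: [set w in N | ~~ P w].
  by apply/setP => w; rewrite !inE -andb_orr orbN andbT.
rewrite imsetU -cardsUI (_ : _ :&: _ = set0) ?cards0 ?addn0 //.
apply/setP => K; rewrite !inE; apply/andP => -[/imsetP[x + ->] /imsetP[y + Kxy]].
rewrite !inE => /andP[xN Px] /andP[yN Py].
have : y \in component x by rewrite Kxy inE connect0.
rewrite inE => /(connect_rGXS_sub FS (subxx Z)) /(P_inv _ _ xN yN).
by rewrite Px (negbTE Py).
Qed.

Lemma separating_S_edge x p : path (rGXS ends set0 Z) x p -> uniq (x :: p) ->
  ~~ connect (rGXS ends S Z) x (last x p) ->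
  exists e a b, [/\ e \in S, joins ends e a b, a \notin Z, b \notin Z &
    connect (rGXS ends [set e] Z) x a /\ connect (rGXS ends [set e] Z) b (last x p)].
Proof.
elim: p x => [|y p IH] x /=; first by rewrite connect0.
case/andP=> xy pth /andP[xp up] not_xp.
case xyS: (rGXS ends S Z x y).
  have not_yp : ~~ connect (rGXS ends S Z) y (last y p).
    by apply: contra not_xp; apply/connect_trans/connect1.
  have [e [a [b [eS jab aZ bZ [ya bp]]]]] := IH y pth up not_yp.
  exists e, a, b; split=> //; split=> //; apply: connect_trans ya; apply: connect1.
  by apply: rGXS_sub xyS; rewrite ?sub1set.
case/and3P: xy => xZ yZ /existsP[e /andP[_ je]].
have eS : e \in S.
  apply: contraFT xyS => eS; apply/and3P; split=> //.
  by apply/existsP; exists e; rewrite eS.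
exists e, x, y; split=> //; split; first exact: connect0.
have := path_rGXS_avoid je xp pth; rewrite setU0 => pth_e.
exact: path_connect pth_e _ (mem_last _ _).
Qed.

Lemma separatingU N (P : pred V) e D1 D2 :
  e \in S -> (ends e).1 \notin Z ->
  {in N &, forall x y, connect (rGXS ends [set e] Z) x y -> P x = P y} ->
  0 < #|component @: [set w in N | P w]| -> 0 < #|component @: [set w in N | ~~ P w]| ->
  separating [set w in N | P w] D1 -> separating [set w in N | ~~ P w] D2 ->
  separating N (e |: (D1 :|: D2)).
Proof.
move=> eS eZ P_inv pos1 pos2 [D1S D1Z D1card D1sep] [D2S D2Z D2card D2sep].
have eS1 : [set e] \subset S by rewrite sub1set.
split.
- by rewrite subUset sub1set eS subUset D1S D2S.
- move=> f; rewrite !inE => /or3P[/eqP -> // | fD1 | fD2]; [exact: D1Z | exact: D2Z].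
- rewrite (card_component_split eS1 P_inv).
  have := cardsU1 e (D1 :|: D2); have := cardsUI D1 D2; have := leq_b1 (e \notin D1 :|: D2).
  lia.
move=> x y xN yN xy.
have sub_e : [set e] \subset e |: (D1 :|: D2) by rewrite sub1set setU11.
have sub_1 : D1 \subset e |: (D1 :|: D2) by rewrite subsetU // subsetUl orbT.
have sub_2 : D2 \subset e |: (D1 :|: D2) by rewrite subsetU // subsetUr orbT.
have Pxy := P_inv x y xN yN (connect_rGXS_sub sub_e (subxx Z) xy).
case Px: (P x); [apply: D1sep | apply: D2sep];
  rewrite ?inE ?xN ?yN -?Pxy ?Px //; exact: connect_rGXS_sub (subxx Z) xy.
Qed.

Hypothesis noS : no_S_cycle ends S Z.

Lemma separating_exists N : exists D, separating N D.
Proof.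
have [n] := ubnP #|component @: N|; elim: n N => // n IH N ltN.
have [/existsP[u /andP[uN /existsP[v /and3P[vN uv uv_S]]]] | no_pair] := boolP
  [exists u in N, exists v in N,
     connect (rGXS ends set0 Z) u v && ~~ connect (rGXS ends S Z) u v]; last first.
  exists set0; split=> [|f||x y xN yN xy]; rewrite ?sub0set ?inE ?cards0 //.
  apply: contraNT no_pair => not_xy.
  by apply/existsP; exists x; rewrite xN; apply/existsP; exists y; rewrite yN xy.
case/connectP: uv => p0 pth0 vE; move: uv_S vN; rewrite {v}vE.
case: (shortenP pth0) => p pth up _ uv_S vN {pth0 p0}.
have [e [a [b [eS jab aZ bZ [ua bv]]]]] := separating_S_edge pth up uv_S.
have not_uv : ~~ connect (rGXS ends [set e] Z) u (last u p).
  apply: contra ((no_S_cycleP _ _).1 noS e a b eS jab bZ) => uv.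
  by rewrite connect_rGXS_sym in uv; apply: connect_trans bv (connect_trans uv ua).
set P := connect (rGXS ends [set e] Z) u.
have P_inv : {in N &, forall x y, connect (rGXS ends [set e] Z) x y -> P x = P y}.
  move=> x y _ _ xy; apply/idP/idP => ux; first exact: connect_trans ux xy.
  by rewrite connect_rGXS_sym in xy; apply: connect_trans ux xy.
have pos1 : 0 < #|component @: [set w in N | P w]|.
  by apply/card_gt0P; exists (component u); apply: imset_f; rewrite inE uN /P connect0.
have pos2 : 0 < #|component @: [set w in N | ~~ P w]|.
  by apply/card_gt0P; exists (component (last u p)); apply: imset_f; rewrite inE vN not_uv.
have eS1 : [set e] \subset S by rewrite sub1set.
have cardN := card_component_split eS1 P_inv.
have [D1 D1sep] : exists D1, separating [set w in N | P w] D1.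
  by apply: IH; move: ltN pos2; rewrite cardN; clear; lia.
have [D2 D2sep] : exists D2, separating [set w in N | ~~ P w] D2.
  by apply: IH; move: ltN pos1; rewrite cardN; clear; lia.
exists (e |: (D1 :|: D2)); apply: separatingU D1sep D2sep => //.
by case/orP: (joins_fst jab) => /eqP ->.
Qed.

End Separation.

Lemma interesting_component S F Z v w :
  connect (rGXS ends F Z) v w -> w \in VS ends S ->
  interesting (VS ends S) (component S Z v).
Proof.
rewrite /interesting; case/connectP=> p pth ->; elim: p v pth => [|y p IH] v /=.
  by move=> _ vT; apply/set0Pn; exists v; rewrite in_setI vT inE connect0.
case/andP=> /and3P[vZ yZ /existsP[f /andP[_ jf]]] pth /(IH y pth).
case fS: (f \in S).
  by move=> _; apply/set0Pn; exists v; rewrite in_setI (joins_VS fS jf) inE connect0.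
case/set0Pn => t; rewrite in_setI inE => /andP[yt tT]; apply/set0Pn; exists t.
rewrite in_setI tT inE andbT; apply: connect_trans yt; apply: connect1.
by apply/and3P; split=> //; apply/existsP; exists f; rewrite fS jf.
Qed.

Lemma connect_rGXS_first_hit F Z Y x z :
  x \notin Y -> connect (rGXS ends F Z) x z ->
  connect (rGXS ends F (Z :|: Y)) x z \/
  exists v y, [/\ connect (rGXS ends F (Z :|: Y)) x v, rGXS ends F Z v y & y \in Y].
Proof.
move=> + /connectP[p pth ->]; elim: p x pth => [|y p IH] x /=.
  by left; apply: connect0.
case/andP=> xy pth xY.
have xy_Y : y \notin Y -> rGXS ends F (Z :|: Y) x y.
  by case/and3P: xy => xZ yZ xy yY; apply/and3P; rewrite !inE !negb_or xZ yZ xY yY.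
case yY: (y \in Y); first by right; exists x, y; split=> //; apply: connect0.
have [yp | [v [w [yv vw wY]]]] := IH y pth (negbT yY).
  by left; apply: connect_trans yp; apply/connect1/xy_Y; rewrite yY.
by right; exists v, w; split=> //; apply: connect_trans yv; apply/connect1/xy_Y; rewrite yY.
Qed.

Definition interesting_neighbours S X Y : {set V} :=
  [set z | [&& z \notin X, [exists y in Y, adjacent ends y z] &
               interesting (VS ends S) (component S X z)]].

Definition exchange X Y D : {set V} :=
  (X :\: Y) :|: [set (ends f).1 | f in D].

Lemma fst_VS S D : D \subset S -> [set (ends f).1 | f in D] \subset VS ends S.
Proof.
move=> DS; apply/subsetP => _ /imsetP[f fD ->]; rewrite inE; apply/existsP; exists f.
by rewrite (subsetP DS f fD) eqxx.
Qed.

Lemma disjoint_fst X D :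
  {in D, forall f, (ends f).1 \notin X} -> [disjoint X & [set (ends f).1 | f in D]].
Proof.
move=> DX; rewrite disjoint_sym disjoint_subset.
by apply/subsetP => _ /imsetP[f fD ->]; rewrite inE DX.
Qed.

Lemma component_interesting_neighbours S X Y :
  component S X @: interesting_neighbours S X Y \subset
  [set K | [&& is_component ends S X K, interesting (VS ends S) K & sees ends Y K]].
Proof.
apply/subsetP => _ /imsetP[z + ->]; rewrite !inE => /and3P[zX /existsP[y /andP[yY yz]] iz].
rewrite iz; apply/andP; split; first by apply/existsP; exists z; rewrite zX /component eqxx.
by apply/existsP; exists y; rewrite yY; apply/existsP; exists z; rewrite yz inE connect0.
Qed.

Section Exchange.
Variables (S : {set E}) (X Y : {set V}) (D : {set E}).
Hypothesis noS : no_S_cycle ends S X.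
Hypothesis Y_T : [disjoint Y & VS ends S].
Hypothesis D_sep : {in interesting_neighbours S X Y &, forall u v,
  connect (rGXS ends D X) u v -> connect (rGXS ends S X) u v}.

Local Notation X' := (exchange X Y D).

Lemma notin_exchange x : x \notin X' :|: Y -> x \notin X.
Proof. by apply: contraNN => xX; rewrite !inE xX; case: (x \in Y); rewrite ?orbT. Qed.

Lemma exchange_fst f : f \in D -> (ends f).1 \in X'.
Proof. by move=> fD; apply/setUP; right; apply/imsetP; exists f. Qed.

Lemma rGXS_exchange e : subrel (rGXS ends [set e] (X' :|: Y)) (rGXS ends (e |: D) X).
Proof.
move=> u w /and3P[uX' wX' /existsP[f /andP[fe jf]]].
apply/and3P; split; rewrite ?notin_exchange //; apply/existsP; exists f.
rewrite jf in_setU1 negb_or -in_set1 fe andbT; apply/negP => fD.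
have W_f : (ends f).1 \in X' :|: Y by rewrite in_setU exchange_fst.
by case/orP: (joins_fst jf) W_f => /eqP ->; rewrite ?(negbTE uX') ?(negbTE wX').
Qed.

Lemma connect_rGXS_exchange e x z :
  connect (rGXS ends [set e] (X' :|: Y)) x z -> connect (rGXS ends (e |: D) X) x z.
Proof. by apply: connect_sub => u w /rGXS_exchange /connect1. Qed.

Lemma exchange_reach e x z : x \in VS ends S -> x \notin X' ->
  connect (rGXS ends [set e] X') x z ->
  connect (rGXS ends (e |: D) X) x z \/
  exists2 v, v \in interesting_neighbours S X Y & connect (rGXS ends (e |: D) X) x v.
Proof.
move=> xT xX'; have xY := negbT (disjointFl Y_T xT).
case/(connect_rGXS_first_hit xY) => [/connect_rGXS_exchange xz | [v [y [xv vy yY]]]].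
  by left.
have {}xv := connect_rGXS_exchange xv; right; exists v => //.
have xX : x \notin X by apply: notin_exchange; rewrite inE negb_or xX' xY.
rewrite inE (connect_rGXS_notin xv xX) /=; apply/andP; split.
  case/and3P: vy => _ _ /existsP[f /andP[_ jf]].
  by apply/existsP; exists y; rewrite yY; apply/existsP; exists f; rewrite joinsC.
by apply: (interesting_component (F := e |: D) (w := x)) xT; rewrite connect_rGXS_sym.
Qed.

Lemma exchange_no_S_cycle : no_S_cycle ends S X'.
Proof.
apply/no_S_cycleP => e a b eS jab bX'; apply/negP => ba.
have aX' := connect_rGXS_notin ba bX'.
have aT : a \in VS ends S := joins_VS eS jab.
have bT : b \in VS ends S by apply: (joins_VS (y := a) eS); rewrite joinsC.
have notin_X x : x \in VS ends S -> x \notin X' -> x \notin X.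
  by move=> xT xX'; apply: notin_exchange; rewrite inE negb_or xX' (disjointFl Y_T xT).
have [aX bX] := (notin_X a aT aX', notin_X b bT bX').
have eD : e \notin D.
  apply/negP => /exchange_fst.
  by case/orP: (joins_fst jab) => /eqP ->; rewrite ?(negbTE aX') ?(negbTE bX').
have eS1 : [set e] \subset S by rewrite sub1set.
have to_e : subrel (connect (rGXS ends (e |: D) X)) (connect (rGXS ends [set e] X)).
  by move=> x y; apply: connect_rGXS_sub; rewrite ?sub1set ?setU11.
have to_D : subrel (connect (rGXS ends (e |: D) X)) (connect (rGXS ends D X)).
  by move=> x y; apply: connect_rGXS_sub; rewrite ?subsetUr.
have bridge := (no_S_cycleP _ _).1 noS e a b eS jab bX.
have ab : connect (rGXS ends [set e] X') a b by rewrite connect_rGXS_sym.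
case: (exchange_reach bT bX' ba) => [/to_e ba_e | [v vN bv]].
  by rewrite ba_e in bridge.
case: (exchange_reach aT aX' ab) => [/to_e ab_e | [u uN au]].
  by rewrite connect_rGXS_sym ab_e in bridge.
have ba_D : rGXS ends D X b a.
  by apply/and3P; split=> //; apply/existsP; exists e; rewrite eD joinsC.
have vu : connect (rGXS ends D X) v u.
  rewrite connect_rGXS_sym in bv.
  exact: connect_trans (connect_trans (to_D _ _ bv) (connect1 ba_D)) (to_D _ _ au).
have vu_e := connect_rGXS_sub eS1 (subxx X) (D_sep vN uN vu).
rewrite connect_rGXS_sym in au.
by rewrite (connect_trans (connect_trans (to_e _ _ bv) vu_e) (to_e _ _ au)) in bridge.
Qed.

End Exchange.

End Multigraph.

Theorem lemma5 (V E : finType) (ends : E -> V * V) (S : {set E}) (k : nat)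
    (X : {set V}) :
  dominant ends S k X ->
  forall Y : {set V}, Y \subset X :\: VS ends S -> Y != set0 ->
    #|Y| + 2 <= #|[set K : {set V} | [&& is_component ends S X K,
                                        interesting (VS ends S) K &
                                        sees ends Y K]]|.
Proof.
move=> [[Xk noS] [minX domX]] Y sY Yne; rewrite leqNgt; apply/negP => few.
have YX : Y \subset X by apply: subset_trans sY (subsetDl _ _).
have Y_T : [disjoint Y & VS ends S].
  by rewrite disjoints_subset (subset_trans sY) // setDE subsetIr.
have [D [DS DX Dcard Dsep]] := separating_exists noS (interesting_neighbours ends S X Y).
have DY : #|D| <= #|Y|.
  have := subset_leq_card (component_interesting_neighbours ends S X Y).
  by move/leq_ltn_trans/(_ few); lia.
set W := [set (ends f).1 | f in D].
have W_T : W \subset VS ends S := fst_VS ends DS.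
have X_W : [disjoint X & W] := disjoint_fst DX.
have cardX' : #|exchange ends X Y D| = #|X| - #|Y| + #|W| := card_exchange YX X_W.
have cardXT : #|X :&: VS ends S| + #|W| <= #|exchange ends X Y D :&: VS ends S|.
  exact: card_exchangeI Y_T W_T X_W.
have cardW : #|W| <= #|D| := leq_imset_card _ _.
have cardY : #|Y| <= #|X| := subset_leq_card YX.
have Y_pos : 0 < #|Y| by rewrite card_gt0.
have solX' : is_solution ends S k (exchange ends X Y D).
  by split; [lia | exact: exchange_no_S_cycle].
have eqX : #|exchange ends X Y D| = #|X| by have := minX _ solX'; lia.
have := domX _ solX' eqX; lia.
Qed.
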